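(* Let $\mathcal{D}$ be a domain, let $a\in\mathrm{IET}(\mathcal{D})$ be stable, with irreducible components $I_1,\dots,I_r$. Let $g\in\mathrm{IET}(\mathcal{D})$ be such that $gag^{-1}$ commutes with $a$. Then for every $i$, either $g(I_i)$ is disjoint from $I_1\cup\dots\cup I_r$, or $g(I_i)=I_j$ for some $j$.
   Context: A domain is a non-empty disjoint union of finitely many oriented circles and oriented half-open bounded intervals closed on the left; a subdomain is a subset that is itself a domain. $\mathrm{IET}(\mathcal{D})$ is the group of bijections of $\mathcal{D}$ that are orientation-preserving piecewise isometries, left-continuous, with finitely many discontinuity points. For a finitely generated $G<\mathrm{IET}(\mathcal{D})$: $G$ is irreducible on a $G$-invariant subdomain $J$ if every $G$-orbit in $J$ is dense in $J$; the irreducible components of $G$ are the members of the unique finite collection of pairwise disjoint $G$-invariant subdomains on each of which $G$ is irreducible and such that $G$ acts as a finite group on the complement of their union. $G$ is stable if every subdomain invariant under a finite index subgroup of $G$ is $G$-invariant. An element $a$ is called stable (resp. irreducible) if $\langle a\rangle$ is stable (resp. irreducible on $\mathcal{D}$), and its irreducible components are those of $\langle a\rangle$. *)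

From HB Require Import structures.
From mathcomp Require Import all_boot all_order all_algebra.
From mathcomp Require Import classical_sets reals.
Unset Printing Implicit Defensive.
Import Order.TTheory GRing.Theory Num.Theory.
Local Open Scope ring_scope.
Local Open Scope classical_set_scope.

(* A domain: finitely many (>= 1) components; component k is the half-open
   interval [0, len k) if circ k = false, or the circle R/(len k)Z (coordinatized
   by [0, len k)) if circ k = true. *)
 Record domain (R : realType) := Domain {
   ncomp : nat;
   len : 'I_ncomp -> R;
   circ : 'I_ncomp -> bool;
   len_gt0 : forall k, 0 < len k;
   ncomp_gt0 : (0 < ncomp)%N }.

Arguments ncomp {R}.
Arguments len {R}.
Arguments circ {R}.

Definition dpoint (R : realType) (D : domain R) :=
  {p : 'I_(ncomp D) * R | (0 <= p.2) && (p.2 < len D p.1)}.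

Arguments dpoint {R}.

Definition comp (R : realType) (D : domain R) (p : dpoint D) : 'I_(ncomp D) := (val p).1.
Arguments comp {R D}.

Definition coord (R : realType) (D : domain R) (p : dpoint D) : R := (val p).2.

Arguments coord {R D}.

Definition box (R : realType) (D : domain R) (k : 'I_(ncomp D)) (a b : R)
  : set (dpoint D) := [set p | comp p = k /\ a <= coord p < b].

Arguments box {R D}.

Definition subdomain (R : realType) (D : domain R) (J : set (dpoint D)) : Prop :=
  J !=set0 /\
  exists s : seq ('I_(ncomp D) * R * R),
    forall p, J p <-> exists2 t, t \in s & box t.1.1 t.1.2 t.2 p.

Arguments subdomain {R D}.

(* element of IET(D): a bijection given, on each piece [a,b) of a finite cover
   by half-open pieces, by a translation x |-> x + c into component k'. *)
Definition is_IET (R : realType) (D : domain R) (f : dpoint D -> dpoint D) : Prop :=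
  bijective f /\
  exists s : seq ('I_(ncomp D) * R * R * 'I_(ncomp D) * R),
    (forall p, exists2 t, t \in s & box t.1.1.1.1 t.1.1.1.2 t.1.1.2 p) /\
    (forall t, t \in s -> forall p, box t.1.1.1.1 t.1.1.1.2 t.1.1.2 p ->
        comp (f p) = t.1.2 /\ coord (f p) = coord p + t.2).

Arguments is_IET {R D}.

Definition cdist (R : realType) (D : domain R) (k : 'I_(ncomp D)) (x y : R) : R :=
  if circ D k then Num.min `|x - y| (len D k - `|x - y|) else `|x - y|.

Arguments cdist {R D}.

Definition dense_in (R : realType) (D : domain R) (O J : set (dpoint D)) : Prop :=
  forall p, J p -> forall e : R, 0 < e ->
    exists q, O q /\ J q /\ comp q = comp p /\ cdist (comp p) (coord p) (coord q) < e.

Arguments dense_in {R D}.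

(* orbit of x under the cyclic group <f> (f bijective): {f^k x | k in Z} *)
Definition orbit (T : Type) (f : T -> T) (x : T) : set T :=
  [set y | exists n m : nat, iter n f y = iter m f x].

Arguments orbit {T}.

Definition invariant (T : Type) (f : T -> T) (J : set T) : Prop := f @` J = J.

Arguments invariant {T}.

Definition irreducible_on (R : realType) (D : domain R) (f : dpoint D -> dpoint D)
  (J : set (dpoint D)) : Prop :=
  subdomain J /\ invariant f J /\ forall x, J x -> dense_in (orbit f x) J.

Arguments irreducible_on {R D}.

Definition irreducible_components (R : realType) (D : domain R)
  (f : dpoint D -> dpoint D) (r : nat) (I : 'I_r -> set (dpoint D)) : Prop :=
  (forall i, irreducible_on f (I i)) /\
  (forall i j, i != j -> I i `&` I j = set0) /\
  (exists n : nat, (0 < n)%N /\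
     forall x, ~ (exists i, I i x) -> iter n f x = x).

Arguments irreducible_components {R D} f {r}.

(* <f> is stable: finite index subgroups of <f> are the <f^n>, n >= 1 *)
Definition stable (R : realType) (D : domain R) (f : dpoint D -> dpoint D) : Prop :=
  forall n : nat, (0 < n)%N -> forall J : set (dpoint D),
    subdomain J -> invariant (iter n f) J -> invariant f J.

Arguments stable {R D}.

(* Put b = g a g^-1, which commutes with a. Conjugating by the IET g, the
   irreducible components of b are the images g(I_l), and b is stable since a is.
   Now let f, h be commuting bijections, f locally a translation and stable, and
   K an irreducible component of h. Every f^m(K) is again an irreducible
   component of h: h-orbits in f^m(K) are dense, and f^m(K) meets some component
   because a finite h-orbit cannot be dense in an open set. By pigeonhole
   f^n(K) = K for some n > 0, so f(K) = K by stability, and then any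
   f-irreducible set meeting K lies in K, by density of its f-orbits. With
   (f, h) = (b, a) and (a, b), a point of g(I_i) in I_j yields g(I_i) = I_j. *)

From Pilot Require Import Defs.
From HB Require Import structures.
From mathcomp Require Import all_boot all_order all_algebra.
From mathcomp Require Import boolp classical_sets reals.
From mathcomp Require Import lra.
Import Order.TTheory GRing.Theory Num.Theory.
Local Open Scope classical_set_scope.
Local Notation orbit := Defs.orbit.
Local Notation invariant := Defs.invariant.
Local Notation coord := Defs.coord.
Local Notation comp := Defs.comp.

Section Iterates.
Context {T : Type}.
Implicit Types (f g h k : T -> T) (A B : set T).

Lemma iter_inj {f} n : injective f -> injective (iter n f).
Proof. by move=> fi; elim: n => //= n IH x y /fi /IH. Qed.

Lemma iter_semiconj {f h k} : (forall x, f (h x) = k (f x)) ->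
  forall n x, f (iter n h x) = iter n k (f x).
Proof. by move=> fhk; elim=> //= n IH x; rewrite fhk IH. Qed.

Lemma invariant_semiconj {f h k A} : (forall x, f (h x) = k (f x)) ->
  invariant h A -> invariant k (f @` A).
Proof.
move=> fhk hA; rewrite /invariant -{2}hA !image_comp.
by apply: eq_imagel => x _ /=; rewrite fhk.
Qed.

Lemma orbit_semiconj {f h k} x : (forall x, f (h x) = k (f x)) ->
  f @` orbit h x `<=` orbit k (f x).
Proof.
by move=> fhk _ [y [n [m E]] <-]; exists n, m; rewrite -!(iter_semiconj fhk) E.
Qed.

Lemma image_can {f g} A : cancel g f -> f @` (g @` A) = A.
Proof. by move=> gK; rewrite image_comp -[RHS]image_id; apply: eq_imagel => x _ /=. Qed.

Lemma inj_image_eq {f A B} : injective f -> f @` A = f @` B -> A = B.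
Proof.
move=> fi AB; apply/seteqP; split => x.
  by rewrite -(image_inj (f := f) fi) AB image_inj.
by rewrite -(image_inj (f := f) fi) -AB image_inj.
Qed.

Lemma invariant_mem {f A x} : invariant f A -> A x -> A (f x).
Proof. by move=> fA Ax; rewrite -fA; exists x. Qed.

Lemma invariant_memV {f A x} : injective f -> invariant f A -> A (f x) -> A x.
Proof. by move=> fi fA; rewrite -{1}fA image_inj. Qed.

Lemma invariant_iter {f A} n : invariant f A -> invariant (iter n f) A.
Proof.
move=> fA; elim: n => [|n IH]; first exact: image_id.
by rewrite /invariant iterfS -image_comp IH.
Qed.

Lemma periodic_orbit {f x d y} : injective f -> (0 < d)%N -> iter d f x = x ->
  orbit f x y -> exists2 j, (j < d)%N & y = iter j f x.
Proof.
move=> fi d0 xd [n [m E]].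
have per M : iter M f x = iter (M %% d) f x.
  by rewrite {1}(divn_eq M d) addnC iterD iterM [X in iter _ f X]iter_fix.
exists ((n * d - n + m) %% d); first by rewrite ltn_mod.
apply: (iter_inj n fi); rewrite E -per -iterD addnA subnKC ?leq_pmulr //.
by rewrite addnC iterD iterM [X in _ = iter m f X]iter_fix.
Qed.

Lemma iter_image_periodic {f r} {S : 'I_r -> set T} {A} : injective f ->
  (forall m, exists l, iter m f @` A = S l) ->
  exists2 n, (0 < n)%N & invariant (iter n f) A.
Proof.
move=> fi imA; have [F FA] := boolp.choice (fun m : 'I_r.+1 => imA m).
have /injectivePn[m1 [m2 m12 Fm]] : ~~ injectiveb F.
  by apply/negP => /injectiveP/leq_card; rewrite !card_ord ltnn.
wlog lt12 : m1 m2 m12 Fm / (m1 < m2)%N.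
  move=> wlog; case: (ltngtP m1 m2) => [|lt21|/val_inj eq12]; first exact: wlog.
    by apply: (wlog m2 m1); rewrite // eq_sym.
  by rewrite eq12 eqxx in m12.
exists (m2 - m1)%N; first by rewrite subn_gt0.
apply: (inj_image_eq (iter_inj m1 fi)); rewrite image_comp.
rewrite (eq_imagel (f' := iter m2 f)) => [|x _].
  by rewrite !FA Fm.
by rewrite /= -iterD (subnKC (ltnW lt12)).
Qed.
End Iterates.

Section RightNeighbourhoods.
Context {R : realType} {D : domain R}.
Local Open Scope ring_scope.
Implicit Types (p q : dpoint D) (A B O : set (dpoint D)) (f h : dpoint D -> dpoint D).

Lemma coord_ge0 p : 0 <= coord p.
Proof. by case/andP: (svalP p). Qed.

Lemma coord_lt_len p : coord p < len D (comp p).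
Proof. by case/andP: (svalP p). Qed.

Lemma dpoint_eq p q : comp p = comp q -> coord p = coord q -> p = q.
Proof.
rewrite /comp /coord => kk' xy; apply: val_inj.
by rewrite [val p]surjective_pairing kk' xy -surjective_pairing.
Qed.

Lemma dpoint_exists k x : 0 <= x -> x < len D k ->
  exists p : dpoint D, comp p = k /\ coord p = x.
Proof.
move=> x0 xk; have Hx : (0 <= x) && (x < len D k) by rewrite x0 xk.
by exists (exist _ (k, x) Hx).
Qed.

Lemma in_box {k a b q} : comp q = k -> a <= coord q -> coord q < b -> box k a b q.
Proof. by move=> qk q1 q2; split; last apply/andP. Qed.

Lemma pos_min2 {e1 e2 : R} : 0 < e1 -> 0 < e2 ->
  exists e : R, [/\ 0 < e, e <= e1 & e <= e2].
Proof.
by move=> e10 e20; exists (Num.min e1 e2); rewrite lt_min e10 e20 !ge_min !lexx orbT.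
Qed.

Lemma cdist_small {k : 'I_(ncomp D)} {x y d : R} : 0 <= y -> y < len D k ->
  d <= x -> x + d <= len D k -> cdist k x y < d -> `|x - y| < d.
Proof.
rewrite /cdist => y0 yk dx xd; case: (circ D k) => //.
rewrite gt_min => /orP[//|].
by case: (lerP y x) => xy; lra.
Qed.

(* Openness is only ever used through right half-neighbourhoods [x, x + e),
   which are mapped by translation under an IET. *)
Definition right_open A := forall p, A p ->
  exists2 e : R, 0 < e & box (comp p) (coord p) (coord p + e) `<=` A.

Definition locally_translating f := forall p, exists2 e : R, 0 < e &
  forall q, box (comp p) (coord p) (coord p + e) q ->
    comp (f q) = comp (f p) /\ coord (f q) = coord (f p) + (coord q - coord p).

Lemma is_IET_locally_translating {f} : is_IET f -> locally_translating f.
Proof.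
move=> [_ [s [cover piece]]] p; have [t ts tp] := cover p.
have [pk /andP[p1 p2]] := tp.
exists (t.1.1.2 - coord p) => [|q [qk /andP[q1 q2]]]; first lra.
have /(piece t ts)[fqk fqx] : box t.1.1.1.1 t.1.1.1.2 t.1.1.2 q.
  by apply: in_box; rewrite ?qk //; lra.
have [fpk fpx] := piece t ts p tp.
by rewrite fqk fpk fqx fpx; split => //; lra.
Qed.

Lemma locally_translating_comp {f h} :
  locally_translating f -> locally_translating h -> locally_translating (h \o f).
Proof.
move=> Lf Lh p; have [e1 e10 fp] := Lf p; have [e2 e20 hfp] := Lh (f p).
have [e [e0 ee1 ee2]] := pos_min2 e10 e20.
exists e => // q [qk /andP[q1 q2]].
have /fp[fqk fqx] : box (comp p) (coord p) (coord p + e1) q.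
  by apply: in_box => //; lra.
have /hfp[hk hx] : box (comp (f p)) (coord (f p)) (coord (f p) + e2) (f q).
  by apply: in_box => //; lra.
by split => //=; rewrite hx fqx; lra.
Qed.

Lemma locally_translating_iter {f} n :
  locally_translating f -> locally_translating (iter n f).
Proof.
move=> Lf; elim: n => [|n IH] p; last exact: (locally_translating_comp IH Lf p).
by exists 1 => // q [qk _]; split => //; lra.
Qed.

Lemma subdomain_right_open {A} : subdomain A -> right_open A.
Proof.
move=> [_ [s Hs]] p Ap; have [t ts [pk /andP[p1 p2]]] := (Hs p).1 Ap.
exists (t.2 - coord p) => [|q [qk /andP[q1 q2]]]; first lra.
by apply/Hs; exists t => //; apply: in_box; rewrite ?qk //; lra.
Qed.

Lemma right_open_img {f A} :
  locally_translating f -> right_open A -> right_open (f @` A).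
Proof.
move=> Lf RA _ [p Ap <-]; have [e1 e10 fp] := Lf p; have [e2 e20 pA] := RA p Ap.
have [e' [e'0 ee1 ee2]] := pos_min2 e10 e20.
have [|e [e0 ee' el]] := pos_min2 e'0 (_ : 0 < len D (comp p) - coord p).
  by have := coord_lt_len p; lra.
exists e => // q [qk /andP[q1 q2]]; have p0 := coord_ge0 p.
have [u [uk ux]] : exists u : dpoint D,
    comp u = comp p /\ coord u = coord p + (coord q - coord (f p)).
  by apply: dpoint_exists; lra.
exists u; first by apply: pA; apply: in_box => //; lra.
have /fp[fuk fux] : box (comp p) (coord p) (coord p + e1) u.
  by apply: in_box => //; lra.
by apply: dpoint_eq; rewrite ?fuk ?qk // fux ux; lra.
Qed.

Lemma cdist_lt (k : 'I_(ncomp D)) (x y d : R) :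
  x - d < y -> y < x + d -> cdist k x y < d.
Proof.
move=> y1 y2; apply: le_lt_trans (_ : `|x - y| < d).
  by rewrite /cdist; case: (circ D k) => //; rewrite ge_min lexx.
by case: (lerP y x) => _; lra.
Qed.

Lemma dense_in_box {O A} p (e : R) : dense_in O A -> 0 < e ->
  box (comp p) (coord p) (coord p + e) `<=` A ->
  exists q, [/\ O q, A q & box (comp p) (coord p) (coord p + e) q].
Proof.
move=> dO e0 pA; have p0 := coord_ge0 p.
have [|e' [e'0 ee' el]] := pos_min2 e0 (_ : 0 < len D (comp p) - coord p).
  by have := coord_lt_len p; lra.
have [c [ck cx]] : exists c : dpoint D, comp c = comp p /\ coord c = coord p + e' / 2.
  by apply: dpoint_exists; lra.
have Ac : A c by apply: pA; apply: in_box => //; lra.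
have [|q [Oq [Aq [qk cq]]]] := dO c Ac (e' / 2); first lra.
have qlen := coord_lt_len q; rewrite qk ck in qlen; rewrite ck in cq.
have : `|coord c - coord q| < e' / 2.
  by apply: (cdist_small (coord_ge0 q) qlen) => //; rewrite cx; lra.
case: (lerP (coord q) (coord c)) => qc dq.
  by exists q; split => //; apply: in_box; rewrite ?qk ?ck //; lra.
by exists q; split => //; apply: in_box; rewrite ?qk ?ck //; lra.
Qed.

Lemma sub_dense_in {O O' A} : O `<=` O' -> dense_in O A -> dense_in O' A.
Proof. by move=> OO' dO p Ap e e0; have [q [/OO' Oq qA]] := dO p Ap e e0; exists q. Qed.

Lemma dense_in_img {f O A} : locally_translating f -> right_open A -> dense_in O A ->
  dense_in (f @` O) (f @` A).
Proof.
move=> Lf RA dO _ [p Ap <-] eps eps0.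
have [e1 e10 fp] := Lf p; have [e2 e20 pA] := RA p Ap.
have [e' [e'0 ee1 ee2]] := pos_min2 e10 e20.
have [e [e0 ee' ee]] := pos_min2 e'0 eps0.
have [|q [Oq Aq [qk /andP[q1 q2]]]] := dense_in_box p e dO e0 _.
  by move=> q [qk /andP[q1 q2]]; apply: pA; apply: in_box => //; lra.
have /fp[fqk fqx] : box (comp p) (coord p) (coord p + e1) q.
  by apply: in_box => //; lra.
exists (f q); split; first by exists q.
by split; [exists q | split => //; apply: cdist_lt; lra].
Qed.

Lemma dense_orbits_subset_invariant {f A B y} : injective f -> right_open A ->
  (forall x, A x -> dense_in (orbit f x) A) -> invariant f B -> right_open B ->
  A y -> B y -> A `<=` B.
Proof.
move=> fi RA dA fB RB Ay By p Ap.
have [e1 e10 yA] := RA y Ay; have [e2 e20 yB] := RB y By.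
have [e [e0 ee1 ee2]] := pos_min2 e10 e20.
have [|q [[n [m E]] _ [qk /andP[q1 q2]]]] := dense_in_box y e (dA p Ap) e0 _.
  by move=> q [qk /andP[q1 q2]]; apply: yA; apply: in_box => //; lra.
have Bq : B q by apply: yB; apply: in_box => //; lra.
apply: (invariant_memV (iter_inj m fi) (invariant_iter m fB)); rewrite -E.
exact: (invariant_mem (invariant_iter n fB)).
Qed.

Lemma interval_avoids_seq (s : seq R) {u v : R} : u < v -> exists u' v',
  [/\ u <= u', u' < v', v' <= v & forall x, x \in s -> u' <= x -> v' <= x].
Proof.
elim: s => [uv|x s IH /IH[u1 [v1 [uu1 u1v1 v1v avoid]]]]; first by exists u, v.
have [xc|cx] := ltrP x ((u1 + v1) / 2).
  exists ((u1 + v1) / 2), v1; split; try lra.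
  by move=> y; rewrite in_cons => /orP[/eqP ->|/avoid]; lra.
exists u1, ((u1 + v1) / 2); split; try lra.
by move=> y; rewrite in_cons => /orP[/eqP ->|/avoid]; lra.
Qed.

Lemma periodic_not_dense {f A x d} : injective f -> (0 < d)%N -> iter d f x = x ->
  right_open A -> A x -> ~ dense_in (orbit f x) A.
Proof.
move=> fi d0 xd RA Ax dA; have [e e0 xA] := RA x Ax.
have [|e' [e'0 ee' el]] := pos_min2 e0 (_ : 0 < len D (comp x) - coord x).
  by have := coord_lt_len x; lra.
have [|u [v [xu uv ve avoid]]] :=
  interval_avoids_seq [seq coord (iter j f x) | j <- iota 0 d] (_ : coord x < coord x + e').
  by lra.
have [c [ck cx]] : exists c : dpoint D, comp c = comp x /\ coord c = u.
  by apply: dpoint_exists; have := coord_ge0 x; lra.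
have [||q [Oq _ [qk /andP[q1 q2]]]] := dense_in_box c (v - u) dA (_ : 0 < v - u) _.
- lra.
- by move=> q [qk /andP[q1 q2]]; apply: xA; apply: in_box; rewrite ?qk //; lra.
have [j jd qj] := periodic_orbit fi d0 xd Oq.
have /avoid : coord q \in [seq coord (iter j f x) | j <- iota 0 d].
  by rewrite qj; apply: map_f; rewrite mem_iota add0n jd.
lra.
Qed.
End RightNeighbourhoods.

Section IETImages.
Context {R : realType} {D : domain R}.
Local Open Scope ring_scope.
Implicit Types (f g : dpoint D -> dpoint D) (J : set (dpoint D)).

Lemma setI_box (k : 'I_(ncomp D)) (a b c d : R) :
  box k a b `&` box k c d = box k (Num.max a c) (Num.min b d).
Proof.
apply/seteqP; split => [q [[qk /andP[q1 q2]] [_ /andP[q3 q4]]]|q [qk]].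
  by apply: in_box; rewrite ?ge_max ?lt_min ?q1 ?q2 ?q3.
by rewrite ge_max lt_min => /andP[/andP[q1 q3] /andP[q2 q4]]; split; apply: in_box.
Qed.

Lemma translation_img_box f (k k' : 'I_(ncomp D)) (a b t : R) :
  (forall p, box k a b p -> comp (f p) = k' /\ coord (f p) = coord p + t) ->
  f @` box k a b = box k' (Num.max a 0 + t) (Num.min b (len D k) + t).
Proof.
move=> tr; have ma : a <= Num.max a 0 by rewrite le_max lexx.
have m0 : 0 <= Num.max a 0 by rewrite le_max lexx orbT.
have nb : Num.min b (len D k) <= b by rewrite ge_min lexx.
have nl : Num.min b (len D k) <= len D k by rewrite ge_min lexx orbT.
apply/seteqP; split => [_ [p /[dup] pb [pk /andP[p1 p2]] <-]|q [qk /andP[q1 q2]]].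
  have [fpk fpx] := tr p pb.
  have pm : Num.max a 0 <= coord p by rewrite ge_max p1 coord_ge0.
  have pn : coord p < Num.min b (len D k) by rewrite lt_min p2 -pk coord_lt_len.
  by apply: in_box => //; rewrite fpx; lra.
have [p [pk px]] : exists p : dpoint D, comp p = k /\ coord p = coord q - t.
  by apply: dpoint_exists; lra.
have pb : box k a b p by apply: in_box => //; lra.
exists p => //; have [fpk fpx] := tr p pb.
by apply: dpoint_eq; rewrite ?fpk ?qk // fpx px; lra.
Qed.

(* A piece t = (k, a, b, k', c) of an IET is the box [a, b) of component k,
   translated by c into component k'; box_img b t is the image of the part of
   the box b inside that piece, (k, 0, 0) encoding the empty box. *)
Definition box_img (b : 'I_(ncomp D) * R * R)
    (t : 'I_(ncomp D) * R * R * 'I_(ncomp D) * R) :=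
  if b.1.1 == t.1.1.1.1 then
    (t.1.2, Num.max (Num.max b.1.2 t.1.1.1.2) 0 + t.2,
     Num.min (Num.min b.2 t.1.1.2) (len D b.1.1) + t.2)
  else (b.1.1, 0, 0).

Lemma img_box_piece {f b t} :
  (forall p, box t.1.1.1.1 t.1.1.1.2 t.1.1.2 p ->
     comp (f p) = t.1.2 /\ coord (f p) = coord p + t.2) ->
  f @` (box b.1.1 b.1.2 b.2 `&` box t.1.1.1.1 t.1.1.1.2 t.1.1.2) =
  box (box_img b t).1.1 (box_img b t).1.2 (box_img b t).2.
Proof.
rewrite /box_img; case: eqP => [-> tr|bt _].
  rewrite setI_box (translation_img_box f _ t.1.2 _ _ t.2) // => p pb.
  by apply: tr; move: pb; rewrite -setI_box => -[].
apply/seteqP; split => [q [p [[pb _] [pt _]] _]|q [_ /= /andP[q1 /(le_lt_trans q1)]]].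
  by case: bt; rewrite -pb -pt.
by rewrite ltxx.
Qed.

Lemma is_IET_subdomain_img {f J} : is_IET f -> subdomain J -> subdomain (f @` J).
Proof.
move=> [_ [s' [cover piece]]] [[x Jx] [s Js]]; split; first by exists (f x), x.
exists [seq box_img b t | b <- s, t <- s'] => q; split.
  move=> [p /Js[b bs bp] <-]; have [t ts tp] := cover p.
  exists (box_img b t); first exact: allpairs_f.
  by rewrite -(img_box_piece (piece t ts)); exists p.
move=> [_ /allpairsP[[b t] [bs ts ->]]] /=.
rewrite -(img_box_piece (piece t ts)).
by move=> [p [bp _] <-]; exists p => //; apply/Js; exists b.
Qed.

Lemma is_IET_inv {f g} : is_IET f -> cancel f g -> cancel g f -> is_IET g.
Proof.
move=> [_ [s [cover piece]]] fK gK; split; first by exists f.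
exists [seq (box_img t.1.1 t, t.1.1.1.1, - t.2) | t <- s]; split.
  move=> q; have [t ts tq] := cover (g q).
  exists (box_img t.1.1 t, t.1.1.1.1, - t.2); first exact: map_f.
  by rewrite /= -(img_box_piece (piece t ts)) setIid; exists (g q).
move=> _ /mapP[t ts ->] q /=; rewrite -(img_box_piece (piece t ts)) setIid.
move=> [p pt <-]; rewrite fK; have [fpk fpx] := piece t ts p pt.
by split; [case: pt | rewrite fpx; lra].
Qed.
End IETImages.

Section Conjugation.
Context {R : realType} {D : domain R}.
Implicit Types (a g ginv : dpoint D -> dpoint D).

Lemma stable_conj {a g ginv} : is_IET g -> cancel g ginv -> cancel ginv g ->
  stable a -> stable (g \o a \o ginv).
Proof.
move=> Hg gK ginvK a_st n n0 J Jsub bJ.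
have ginv_b x : ginv ((g \o a \o ginv) x) = a (ginv x) by rewrite /= gK.
have g_a x : g (a x) = (g \o a \o ginv) (g x) by rewrite /= gK.
have aJ : invariant (iter n a) (ginv @` J).
  exact: invariant_semiconj (iter_semiconj ginv_b n) bJ.
rewrite -(image_can J ginvK); apply: invariant_semiconj g_a _.
exact: a_st n n0 _ (is_IET_subdomain_img (is_IET_inv Hg gK ginvK) Jsub) aJ.
Qed.

Lemma irreducible_components_conj {a g ginv r} {I : 'I_r -> set (dpoint D)} :
  is_IET g -> cancel g ginv -> cancel ginv g -> irreducible_components a I ->
  irreducible_components (g \o a \o ginv) (fun l => g @` I l).
Proof.
move=> Hg gK ginvK [Iirr [Idisj [N [N0 HN]]]].
have g_a x : g (a x) = (g \o a \o ginv) (g x) by rewrite /= gK.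
have ginv_b x : ginv ((g \o a \o ginv) x) = a (ginv x) by rewrite /= gK.
split; [|split].
- move=> l; have [Isub [Iinv Idense]] := Iirr l; split; [|split].
  + exact: is_IET_subdomain_img.
  + exact: invariant_semiconj g_a Iinv.
  + move=> _ [x Ix <-]; apply: sub_dense_in (orbit_semiconj x g_a) _.
    apply: dense_in_img (is_IET_locally_translating Hg) _ (Idense x Ix).
    exact: subdomain_right_open Isub.
- move=> l l' ll'; apply/seteqP; split => // _ [[x Ix <-] [y Iy /(can_inj gK) yx]].
  have : (I l `&` I l') x by split; rewrite // -yx.
  by rewrite Idisj.
- exists N; split => // x xI; apply: (can_inj ginvK).
  rewrite (iter_semiconj ginv_b) HN // => -[l Il].
  by apply: xI; exists l, (ginv x).
Qed.
End Conjugation.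

Section Components.
Context {R : realType} {D : domain R}.
Implicit Types (f h : dpoint D -> dpoint D).

Lemma iter_image_component {f h r} {K : 'I_r -> set (dpoint D)} i m :
  injective f -> locally_translating f -> injective h -> (forall x, f (h x) = h (f x)) ->
  irreducible_components h K -> exists l, iter m f @` K i = K l.
Proof.
move=> fi Lf hi fh [Kirr [_ [N [N0 HN]]]].
have [[y Ky] _] := (Kirr i).1.
have Fh x : iter m f (h x) = h (iter m f x).
  by rewrite (iter_semiconj (fun x => esym (fh x))).
have KRO l : right_open (K l) := subdomain_right_open (Kirr l).1.
have LF := locally_translating_iter m Lf.
have [l Kl] : exists l, K l (iter m f y).
  (* otherwise h^N fixes f^m y, hence y, and a periodic h-orbit is not dense *)
  apply: contrapT => /HN yN.
  apply: (periodic_not_dense hi N0 _ (KRO i) Ky ((Kirr i).2.2 y Ky)).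
  by apply: (iter_inj m fi); rewrite (iter_semiconj Fh) yN.
have FKy : (iter m f @` K i) (iter m f y) by exists y.
exists l; apply/seteqP; split.
- apply: (dense_orbits_subset_invariant hi _ _ (Kirr l).2.1 (KRO l) FKy Kl).
    exact: right_open_img LF (KRO i).
  move=> _ [x Kx <-]; apply: sub_dense_in (orbit_semiconj x Fh) _.
  exact: dense_in_img LF (KRO i) ((Kirr i).2.2 x Kx).
- apply: (dense_orbits_subset_invariant hi (KRO l) (Kirr l).2.2 _ _ Kl FKy).
    exact: invariant_semiconj Fh (Kirr i).2.1.
  exact: right_open_img LF (KRO i).
Qed.

Lemma irreducible_sub_component {f h r} {K : 'I_r -> set (dpoint D)} {J i y} :
  injective f -> locally_translating f -> stable f ->
  injective h -> (forall x, f (h x) = h (f x)) ->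
  irreducible_components h K -> irreducible_on f J -> K i y -> J y -> J `<=` K i.
Proof.
move=> fi Lf f_st hi fh hK [Jsub [_ Jdense]] Ky Jy.
have [n n0 fnK] :=
  iter_image_periodic fi (fun m => iter_image_component i m fi Lf hi fh hK).
have fK := f_st n n0 _ (hK.1 i).1 fnK.
exact: dense_orbits_subset_invariant fi (subdomain_right_open Jsub) Jdense fK
  (subdomain_right_open (hK.1 i).1) Jy Ky.
Qed.
End Components.

Theorem mainTheorem11 (R : realType) (D : domain R) (a : dpoint D -> dpoint D)
  (r : nat) (I : 'I_r -> set (dpoint D)) (g ginv : dpoint D -> dpoint D) :
  is_IET a -> stable a -> irreducible_components a I ->
  is_IET g -> cancel g ginv -> cancel ginv g ->
  (forall x, g (a (ginv (a x))) = a (g (a (ginv x)))) ->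
  forall i : 'I_r,
    (g @` I i) `&` (\bigcup_(j in [set: 'I_r]) I j) = set0 \/
    exists j : 'I_r, g @` I i = I j.
Proof.
move=> Ha a_st aI Hg gK ginvK comm_ab i.
pose b := g \o a \o ginv.
have ai : injective a by case: Ha => -[a' aK _] _; exact: can_inj aK.
have bi : injective b := inj_comp (inj_comp (can_inj gK) ai) (can_inj ginvK).
have La := is_IET_locally_translating Ha.
have Lb : locally_translating b.
  apply: locally_translating_comp (is_IET_locally_translating (is_IET_inv Hg gK ginvK)) _.
  exact: locally_translating_comp La (is_IET_locally_translating Hg).
have bI := irreducible_components_conj Hg gK ginvK aI.
have b_st := stable_conj Hg gK ginvK a_st.
case: (pselect (exists j y, (g @` I i) y /\ I j y)) => [[j [y [Ky Iy]]]|disj].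
  right; exists j; apply/seteqP; split.
    exact: irreducible_sub_component bi Lb b_st ai comm_ab aI (bI.1 i) Iy Ky.
  exact: irreducible_sub_component ai La a_st bi (fun x => esym (comm_ab x)) bI (aI.1 j) Ky Iy.
by left; apply/seteqP; split => // y [Ky [j _ Iy]]; apply: disj; exists j, y.
Qed.
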